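(* Let $\mathcal{A}\subseteq M_n(\mathbb{C})$ be logmodular. Then there are complex numbers $\alpha_{ij},\beta_{ij}$, $i,j\in\{1,\dots,n\}$, such that every row of the matrix $[\alpha_{ij}]$ is non-zero, every column of the matrix $[\beta_{ij}]$ is non-zero, and for every $i,j\in\{1,\dots,n\}$ $$\sum_{k=1}^n \alpha_{ik}E_{i,k}\in\mathcal{A},\qquad \sum_{k=1}^n \beta_{kj}E_{k,j}\in\mathcal{A}.$$
   Context: $E_{i,j}$ denote the matrix units of $M_n(\mathbb{C})$. A unital subalgebra $\mathcal{A}\subseteq M_n(\mathbb{C})$ (containing the identity $1_n$) is called logmodular (in $M_n(\mathbb{C})$) if the set $\{a^*a : a\in\mathcal{A}^{-1}\}$ is dense in the set of positive invertible matrices in $M_n(\mathbb{C})$, where $\mathcal{A}^{-1}$ denotes the set of elements of $\mathcal{A}$ invertible in $\mathcal{A}$. *)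

(* Complex numbers are modelled by an arbitrary
   numClosedFieldType C (e.g. algC). *)
From HB Require Import structures.
From mathcomp Require Import all_boot all_order all_algebra.
Set Implicit Arguments. Unset Strict Implicit. Unset Printing Implicit Defensive.
Import Order.TTheory GRing.Theory Num.Theory.
Local Open Scope ring_scope.

Definition adjmx (C : numClosedFieldType) (m n : nat) (a : 'M[C]_(m, n)) : 'M[C]_(n, m) :=
  (map_mx Num.conj a)^T.

Definition unital_subalgebra (C : numClosedFieldType) (n : nat)
    (A : {pred 'M[C]_n}) : Prop :=
  [/\ (1%:M : 'M[C]_n) \in A,
      (forall (c : C) (x y : 'M[C]_n), x \in A -> y \in A -> c *: x + y \in A)
    & (forall x y : 'M[C]_n, x \in A -> y \in A -> x *m y \in A)].

Definition inv_in (C : numClosedFieldType) (n : nat) (A : {pred 'M[C]_n})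
    (a : 'M[C]_n) : Prop :=
  a \in A /\ exists2 b, b \in A & a *m b = 1%:M /\ b *m a = 1%:M.

Definition pos_inv (C : numClosedFieldType) (n : nat) (P : 'M[C]_n) : Prop :=
  [/\ adjmx P = P,
      (forall v : 'cV[C]_n, 0 <= (adjmx v *m P *m v) 0 0)
    & P \in unitmx].

(* logmodular: {a^* a : a \in A^{-1}} is dense (entrywise / any norm topology
   on the finite-dimensional space M_n(C)) in the positive invertible matrices *)
Definition logmodular (C : numClosedFieldType) (n : nat) (A : {pred 'M[C]_n}) : Prop :=
  unital_subalgebra A /\
  forall P : 'M[C]_n, pos_inv P ->
    forall eps : C, 0 < eps ->
      exists2 a, inv_in A a &
        forall i j, `|(adjmx a *m a - P) i j| < eps.

From mathcomp Require Import all_boot all_order all_algebra.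
From Stdlib Require Import Classical.

Set Implicit Arguments. Unset Strict Implicit. Unset Printing Implicit Defensive.
Import Order.TTheory GRing.Theory Num.Theory.
Local Open Scope ring_scope.

(* If no nonzero element of A is supported on row i, then x |-> (1 - E_ii) x is
   injective on the subspace A, so |x| <= K |(1 - E_ii) x| entrywise on A for
   some constant K.  Approximate diag(1,..,delta,..,1) by a^* a with a, a^-1 in A.
   Column i of a then has size about sqrt delta, while the identity
   a^* a a^-1 = a^* keeps the rows of a^-1 other than row i bounded independently
   of delta; so all of a^-1 is bounded by a multiple of K, and
   1 = (a^-1 a)_ii fails once delta is small.  Columns are symmetric, with
   x |-> x (1 - E_jj) and diag(1,..,T,..,1): the columns of a other than j stay
   bounded, hence so does column j, against (a^* a)_jj ~ T for T large. *)

Section SubspaceDichotomy.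
Variables (F : fieldType) (n : nat) (A : {pred 'M[F]_n}).
Hypothesis A0 : 0 \in A.
Hypothesis A_lin : forall (c : F) (x y : 'M[F]_n), x \in A -> y \in A -> c *: x + y \in A.

Definition vec_span_in d (S : 'M[F]_(d, n * n)) :=
  forall c : 'rV_d, vec_mx (c *m S) \in A.

Lemma exists_vec_spanning_mx :
  exists d (S : 'M[F]_(d, n * n)),
    vec_span_in S /\ forall x, x \in A -> (mxvec x <= S)%MS.
Proof.
suff [//|[d [S [_ rankS]]]] : (exists d (S : 'M[F]_(d, n * n)),
      vec_span_in S /\ forall x, x \in A -> (mxvec x <= S)%MS) \/
    exists d (S : 'M[F]_(d, n * n)), vec_span_in S /\ ((n * n).+1 <= \rank S)%N.
  by have := rank_leq_col S; rewrite leqNgt rankS.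
elim: (n * n).+1 => [|k IHk].
  by right; exists 0%N, 0; split=> // c; rewrite mulmx0 linear0.
case: IHk => [spansA|[d [S [spanS rankS]]]]; first by left.
have [[x xA xS]|noX] := classic (exists2 x, x \in A & ~~ (mxvec x <= S)%MS); last first.
  left; exists d, S; split=> // x xA.
  by apply/negPn/negP => xS; apply: noX; exists x.
right; exists (d + 1)%N, (col_mx S (mxvec x)); split.
  move=> c; rewrite -[c]hsubmxK mul_row_col linearD /= addrC.
  by rewrite [rsubmx c]mx11_scalar mul_scalar_mx linearZ /= mxvecK A_lin.
apply: leq_ltn_trans rankS (rank_ltmx _).
by rewrite ltmxE -addsmxE addsmxSl /= col_mx_sub submx_refl.
Qed.

Lemma kernel_or_left_inverse (f : {linear 'M[F]_n -> 'M[F]_n}) :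
  (exists2 x, x \in A & x != 0 /\ f x = 0) \/
  exists W : 'M[F]_(n * n), forall x, x \in A -> mxvec x = mxvec (f x) *m W.
Proof.
have [d [S [spanS AS]]] := exists_vec_spanning_mx.
pose B := S *m lin_mx f.
have [[c [cS cB]]|injB] := classic (exists c : 'rV_d, c *m S != 0 /\ c *m B = 0).
  left; exists (vec_mx (c *m S)); first exact: spanS.
  split; first by apply: contra cS => /eqP/(canRL vec_mxK); rewrite linear0 => ->.
  by apply: (can_inj mxvecK); rewrite -mul_vec_lin vec_mxK -mulmxA cB linear0.
right; exists (pinvmx B *m S) => x xA.
pose c := mxvec x *m pinvmx S.
have xE : mxvec x = c *m S by rewrite mulmxKpV ?AS.
have fxE : mxvec (f x) = c *m B by rewrite -mul_vec_lin xE mulmxA.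
have : (c - mxvec (f x) *m pinvmx B) *m S = 0.
  apply: NNPP => cS; apply: injB; exists (c - mxvec (f x) *m pinvmx B).
  by split; [apply/eqP | rewrite mulmxBl mulmxKpV fxE ?submxMl // subrr].
by rewrite mulmxBl mulmxA -xE => /eqP; rewrite subr_eq0 => /eqP.
Qed.

End SubspaceDichotomy.

Lemma kernel_or_bounded_inverse (R : numFieldType) (n : nat) (A : {pred 'M[R]_n})
    (f : {linear 'M[R]_n -> 'M[R]_n}) :
  0 \in A -> (forall (c : R) (x y : 'M[R]_n), x \in A -> y \in A -> c *: x + y \in A) ->
  (exists2 x, x \in A & x != 0 /\ f x = 0) \/
  exists2 K : R, 0 <= K & forall x B, x \in A -> (forall p q, `|f x p q| <= B) ->
    forall p q, `|x p q| <= B * K.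
Proof.
move=> A0 A_lin; have [|[W xW]] := kernel_or_left_inverse A0 A_lin f; first by left.
right; exists (\sum_m \sum_l `|W m l|); first by apply: sumr_ge0 => m _; apply: sumr_ge0.
move=> x B xA fx_le p q; have B_ge0 : 0 <= B := le_trans (normr_ge0 _) (fx_le p q).
rewrite -mxvecE xW // mxE; apply: le_trans (ler_norm_sum _ _ _) _.
rewrite mulr_sumr; apply: ler_sum => m _; rewrite normrM ler_pM //.
  by case/mxvec_indexP: m => p' q'; rewrite mxvecE.
by rewrite (bigD1 (mxvec_index p q)) //= lerDl; apply: sumr_ge0.
Qed.

Lemma diag_perturbation_bound (R : numFieldType) (n : nat) (d : 'rV[R]_n)
    (Q b c : 'M[R]_n) (delta eps B : R) :
  0 < delta -> (forall k, delta <= d 0 k) -> 2 * n%:R * eps <= delta ->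
  (forall k l, `|(Q - diag_mx d) k l| <= eps) -> (forall k q, `|c k q| <= B) ->
  Q *m b = c -> forall k q, d 0 k * `|b k q| <= 2 * B.
Proof.
move=> delta_gt0 d_ge eps_le QD_le c_le Qb k q.
have eps_ge0 : 0 <= eps := le_trans (normr_ge0 _) (QD_le k k).
have n_gt0 : 0 < n%:R :> R by rewrite ltr0n (leq_trans _ (ltn_ord k)).
pose t := \sum_l `|b l q|.
have t_ge0 : 0 <= t by apply: sumr_ge0.
have row_le l : d 0 l * `|b l q| <= B + eps * t.
  have dl_ge0 : 0 <= d 0 l := le_trans (ltW delta_gt0) (d_ge l).
  have -> : d 0 l * `|b l q| = `|c l q - ((Q - diag_mx d) *m b) l q|.
    by rewrite mulmxBl Qb mul_diag_mx !mxE opprB addrC subrK normrM ger0_norm.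
  apply: le_trans (ler_normB _ _) _; rewrite lerD // mxE.
  apply: le_trans (ler_norm_sum _ _ _) _; rewrite /t mulr_sumr.
  by apply: ler_sum => m _; rewrite normrM ler_wpM2r.
have delta_t : delta * t <= n%:R * (B + eps * t).
  rewrite /t mulr_sumr mulr_natl -[X in _ *+ X]card_ord -sumr_const.
  by apply: ler_sum => l _; apply: le_trans (row_le l); rewrite ler_wpM2r.
have eps_t : eps * t <= B.
  rewrite -(ler_pM2l n_gt0) -(lerD2r (n%:R * (eps * t))).
  have := le_trans (ler_wpM2r t_ge0 eps_le) delta_t.
  by rewrite mulrDr -!mulrA (mulr_natl _ 2) mulr2n.
by apply: le_trans (row_le k) _; rewrite mulr_natl mulr2n lerD2l.
Qed.

Lemma mulmx_eq1_diag_bound (R : numFieldType) (n : nat) (a b : 'M[R]_n) i (M r : R) :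
  b *m a = 1%:M -> (forall q, `|b i q| <= M) -> (forall q, `|a q i| <= r) ->
  1 <= n%:R * (M * r).
Proof.
move=> ba b_le a_le.
apply: (@le_trans _ _ `|(b *m a) i i|); first by rewrite ba mxE eqxx normr1.
rewrite mxE; apply: le_trans (ler_norm_sum _ _ _) _.
rewrite mulr_natl -[X in _ *+ X]card_ord -sumr_const; apply: ler_sum => q _.
by rewrite normrM ler_pM.
Qed.

Section DeltaMx.
Variables (R : pzRingType) (m n : nat).

Lemma mul_delta_mx_diag_l (x : 'M[R]_(m, n)) i p q :
  (delta_mx i i *m x) p q = if p == i then x i q else 0.
Proof.
rewrite mxE (bigD1 i) //= big1 ?addr0 => [|k ki]; rewrite !mxE ?eqxx ?andbT.
  by case: (p == i); rewrite ?mul1r ?mul0r.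
by rewrite (negbTE ki) andbF mul0r.
Qed.

Lemma mul_delta_mx_diag_r (x : 'M[R]_(m, n)) j p q :
  (x *m delta_mx j j) p q = if q == j then x p j else 0.
Proof.
rewrite mxE (bigD1 j) //= big1 ?addr0 => [|k kj]; rewrite !mxE ?eqxx.
  by case: (q == j); rewrite ?mulr1 ?mulr0.
by rewrite (negbTE kj) mulr0.
Qed.

Lemma sum_delta_mx_row (x : 'M[R]_(m, n)) i :
  \sum_k x i k *: delta_mx i k = delta_mx i i *m x.
Proof.
apply/matrixP => p q; rewrite mul_delta_mx_diag_l summxE.
case: eqP => [->|/eqP pi]; last by rewrite big1 // => k _; rewrite !mxE (negbTE pi) mulr0.
rewrite (bigD1 q) //= big1 ?addr0 => [|k kq]; rewrite !mxE ?eqxx ?mulr1 //.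
by rewrite eq_sym (negbTE kq) mulr0.
Qed.

Lemma sum_delta_mx_col (x : 'M[R]_(m, n)) j :
  \sum_k x k j *: delta_mx k j = x *m delta_mx j j.
Proof.
apply/matrixP => p q; rewrite mul_delta_mx_diag_r summxE.
case: eqP => [->|/eqP qj]; last by rewrite big1 // => k _; rewrite !mxE (negbTE qj) andbF mulr0.
rewrite (bigD1 p) //= big1 ?addr0 => [|k kp]; rewrite !mxE ?eqxx ?mulr1 //.
by rewrite eq_sym (negbTE kp) mulr0.
Qed.

End DeltaMx.

Section Logmodular.
Variables (C : numClosedFieldType) (n : nat).

Lemma adjmx_mul_diag (a : 'M[C]_n) k : (adjmx a *m a) k k = \sum_m `|a m k| ^+ 2.
Proof. by rewrite mxE; apply: eq_bigr => m _; rewrite !mxE normCKC. Qed.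

Lemma adjmx_mul_diag_ge0 (a : 'M[C]_n) k : 0 <= (adjmx a *m a) k k.
Proof. by rewrite adjmx_mul_diag sumr_ge0 // => m _; apply: exprn_ge0. Qed.

Lemma norm_sqr_le_adjmx_mul (a : 'M[C]_n) m k : `|a m k| ^+ 2 <= (adjmx a *m a) k k.
Proof.
rewrite adjmx_mul_diag (bigD1 m) //= lerDl.
by apply: sumr_ge0 => l _; apply: exprn_ge0.
Qed.

Lemma pos_inv_diag_mx (d : 'rV[C]_n) : (forall k, 0 < d 0 k) -> pos_inv (diag_mx d).
Proof.
move=> d_gt0; split.
- apply/matrixP => p q; rewrite !mxE rmorphMn /=.
  case: (eqVneq q p) => [->|qp]; last by rewrite !mulr0n.
  by rewrite conj_Creal // gtr0_real.
- move=> v; rewrite mul_mx_diag mxE; apply: sumr_ge0 => k _.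
  by rewrite !mxE /= mulrAC -normCKC mulr_ge0 ?exprn_ge0 // ltW.
- by rewrite unitmxE det_diag unitfE lt0r_neq0 // prodr_gt0.
Qed.

Lemma adjmx_mul_diag_near (a : 'M[C]_n) (d : 'rV[C]_n) (eps : C) k :
  0 < d 0 k -> `|(adjmx a *m a - diag_mx d) k k| < eps ->
  d 0 k - eps < (adjmx a *m a) k k < d 0 k + eps.
Proof.
move=> dk_gt0; rewrite mxE [X in _ + X]mxE [diag_mx d k k]mxE eqxx mulr1n.
by rewrite -real_ltr_distl // rpredB ?(ger0_real (adjmx_mul_diag_ge0 a k)) ?gtr0_real.
Qed.

Lemma norm_lt_near_diag (a : 'M[C]_n) (d : 'rV[C]_n) (eps r : C) m k :
  0 < d 0 k -> 0 <= r -> d 0 k + eps <= r ^+ 2 ->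
  `|(adjmx a *m a - diag_mx d) k k| < eps -> `|a m k| < r.
Proof.
move=> dk_gt0 r_ge0 dk_eps /(adjmx_mul_diag_near dk_gt0)/andP[_ Q_lt].
rewrite -(ltr_pXn2r (_ : 0 < 2)%N) ?nnegrE //.
exact: le_lt_trans (norm_sqr_le_adjmx_mul a m k) (lt_le_trans Q_lt dk_eps).
Qed.

Lemma near_diag_inverse_bound (a b : 'M[C]_n) (d : 'rV[C]_n) (delta eps : C) :
  a *m b = 1%:M -> 0 < delta -> (forall k, delta <= d 0 k <= 1) ->
  2 * n%:R * eps <= delta -> eps <= 1 ->
  (forall k l, `|(adjmx a *m a - diag_mx d) k l| < eps) ->
  forall k q, d 0 k * `|b k q| <= 4.
Proof.
move=> ab delta_gt0 d_bounds eps_le eps_le1 near k q.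
have d_gt0 l : 0 < d 0 l by have /andP[/(lt_le_trans delta_gt0)] := d_bounds l.
have a_le2 m l : `|a m l| <= 2.
  apply/ltW/(norm_lt_near_diag m (d_gt0 l) _ _ (near l l)) => //.
  have /andP[_ dl_le1] := d_bounds l.
  by apply: le_trans (lerD dl_le1 eps_le1) _; rewrite -[1 + 1]/(2%:R : C) -natrX ler_nat.
rewrite -[4]/((2 * 2)%:R : C) natrM.
apply: (diag_perturbation_bound (Q := adjmx a *m a) (b := b) (c := adjmx a))
  delta_gt0 _ eps_le _ _ _ _ _.
- by move=> l; have /andP[] := d_bounds l.
- by move=> l m; apply: ltW.
- by move=> l m; rewrite !mxE norm_conjC.
- by rewrite -mulmxA ab mulmx1.
Qed.

Variable A : {pred 'M[C]_n}.
Hypothesis logA : logmodular A.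

Let A0 : 0 \in A.
Proof.
have [[A1 A_lin _] _] := logA.
by have := A_lin (-1) _ _ A1 A1; rewrite scaleN1r addNr.
Qed.

Let A_lin (c : C) (x y : 'M[C]_n) : x \in A -> y \in A -> c *: x + y \in A.
Proof. by have [[_ A_lin _] _] := logA; apply: A_lin. Qed.

Lemma logmodular_col_support j :
  exists2 y, y \in A & y != 0 /\ y *m delta_mx j j = y.
Proof.
have [[y yA [y_neq0 /eqP]]|[K K_ge0 boundK]] :=
  kernel_or_bounded_inverse (mulmxr (1%:M - delta_mx j j)) A0 A_lin.
  by rewrite /= mulmxBr mulmx1 subr_eq0 eq_sym => /eqP; exists y.
pose T : C := n%:R * (2 * K) ^+ 2 + 1.
pose d := \row_k (if k == j then T else 1) : 'rV[C]_n.
have d_gt0 k : 0 < d 0 k.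
  by rewrite mxE; case: eqP => // _; rewrite ltr_wpDl // mulr_ge0 ?exprn_ge0 ?mulr_ge0.
have [a [aA _] near] := logA.2 _ (pos_inv_diag_mx d_gt0) 1 ltr01.
have a_le2 m k : k != j -> `|a m k| <= 2.
  move=> kj; apply/ltW/(norm_lt_near_diag m (d_gt0 k) _ _ (near k k)) => //.
  by rewrite [d 0 k]mxE (negbTE kj) -[1 + 1]/(2%:R : C) -natrX ler_nat.
have a_le m k : `|a m k| <= 2 * K.
  apply: boundK => // p q; rewrite /= mulmxBr mulmx1 mxE [X in _ + X]mxE.
  rewrite mul_delta_mx_diag_r; case: eqP => [->|/eqP qj]; last by rewrite subr0 a_le2.
  by rewrite subrr normr0.
have /andP[] := adjmx_mul_diag_near (d_gt0 j) (near j j).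
rewrite [d 0 j]mxE eqxx => Qjj_gt _.
suff : (adjmx a *m a) j j <= T - 1 by rewrite (lt_geF Qjj_gt).
rewrite /T addrK adjmx_mul_diag mulr_natl -[X in _ *+ X]card_ord -sumr_const.
by apply: ler_sum => m _; rewrite ler_pXn2r ?nnegrE ?mulr_ge0.
Qed.

Lemma logmodular_row_support i :
  exists2 x, x \in A & x != 0 /\ delta_mx i i *m x = x.
Proof.
have [[x xA [x_neq0 /eqP]]|[K K_ge0 boundK]] :=
  kernel_or_bounded_inverse (mulmx (1%:M - delta_mx i i)) A0 A_lin.
  by rewrite /= mulmxBl mul1mx subr_eq0 eq_sym => /eqP; exists x.
pose L : C := n%:R * (4 * K) + 1.
have L_ge1 : 1 <= L by rewrite /L lerDr !mulr_ge0.
have L_gt0 : 0 < L := lt_le_trans ltr01 L_ge1.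
pose delta : C := (2 * L ^+ 2)^-1.
have delta_gt0 : 0 < delta by rewrite /delta invr_gt0 mulr_gt0 ?exprn_gt0.
have delta_le1 : delta <= 1.
  rewrite /delta invf_le1 ?mulr_gt0 ?exprn_gt0 // mulr_natl mulr2n.
  by apply: le_trans (exprn_ege1 2 L_ge1) _; rewrite lerDl exprn_ge0 // ltW.
pose eps : C := delta / (2 * n%:R + 1).
have n2_gt0 : 0 < 2 * n%:R + 1 :> C by rewrite ltr_wpDl ?mulr_ge0.
have eps_gt0 : 0 < eps by rewrite /eps divr_gt0.
have eps_delta : eps * (2 * n%:R + 1) = delta by rewrite /eps divfK ?lt0r_neq0.
have eps_le : 2 * n%:R * eps <= delta.
  by rewrite -eps_delta mulrDr mulr1 [eps * _]mulrC lerDl ltW.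
have eps_le_delta : eps <= delta.
  by rewrite -eps_delta mulrDr mulr1 lerDr (mulr_ge0 (ltW eps_gt0)) ?mulr_ge0.
pose d := \row_k (if k == i then delta else 1) : 'rV[C]_n.
have d_bounds k : delta <= d 0 k <= 1 by rewrite mxE; case: eqP; rewrite ?lexx delta_le1.
have d_gt0 k : 0 < d 0 k by rewrite mxE; case: eqP.
have [a [_ [b bA [ab ba]]] near] := logA.2 _ (pos_inv_diag_mx d_gt0) eps eps_gt0.
have b_le p q : `|b p q| <= 4 * K.
  apply: boundK => // p' q'.
  rewrite /= mulmxBl mul1mx mxE [X in _ + X]mxE mul_delta_mx_diag_l.
  case: eqP => [->|/eqP p'i]; first by rewrite subrr normr0.
  have := near_diag_inverse_bound ab delta_gt0 d_bounds eps_le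
    (le_trans eps_le_delta delta_le1) near p' q'.
  by rewrite [d 0 p']mxE (negbTE p'i) mul1r subr0.
have a_col_lt q : `|a q i| < L^-1.
  apply: (norm_lt_near_diag q (d_gt0 i) _ _ (near i i)); first by rewrite invr_ge0 ltW.
  rewrite [d 0 i]mxE eqxx exprVn; apply: le_trans (lerD (lexx _) eps_le_delta) _.
  by rewrite -mulr2n -mulr_natl /delta invfM mulrA divff ?mul1r ?pnatr_eq0.
have := mulmx_eq1_diag_bound ba (b_le i) (fun q => ltW (a_col_lt q)).
by rewrite mulrA ler_pdivlMr // mul1r (lt_geF (_ : _ < L)) // ltrDl.
Qed.

End Logmodular.

Theorem lemma1 (C : numClosedFieldType) (n : nat) (A : {pred 'M[C]_n}) :
  logmodular A ->
  exists alpha beta : 'M[C]_n,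
    [/\ (forall i : 'I_n, row i alpha != 0),
        (forall j : 'I_n, col j beta != 0)
      & (forall i j : 'I_n,
           (\sum_(k < n) alpha i k *: delta_mx i k) \in A /\
           (\sum_(k < n) beta k j *: delta_mx k j) \in A)].
Proof.
move=> logA.
have [X XA /all_and2[X_neq0 X_row]] := fin_all_exists2 (logmodular_row_support logA).
have [Y YA /all_and2[Y_neq0 Y_col]] := fin_all_exists2 (logmodular_col_support logA).
pose alpha := \matrix_(i, k) X i i k; pose beta := \matrix_(k, j) Y j k j.
have alphaE i : \sum_k alpha i k *: delta_mx i k = X i.
  by under eq_bigr do rewrite mxE; rewrite sum_delta_mx_row X_row.
have betaE j : \sum_k beta k j *: delta_mx k j = Y j.
  by under eq_bigr do rewrite mxE; rewrite sum_delta_mx_col Y_col.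
exists alpha, beta; split=> [i|j|i j]; last by rewrite alphaE betaE.
- have -> : row i alpha = row i (X i) by apply/rowP => k; rewrite !mxE.
  apply: contraNneq (X_neq0 i) => row0.
  by rewrite -X_row -(mul_delta_mx (0 : 'I_1)) -mulmxA -rowE row0 mulmx0.
- have -> : col j beta = col j (Y j) by apply/colP => k; rewrite !mxE.
  apply: contraNneq (Y_neq0 j) => col0.
  by rewrite -Y_col -(mul_delta_mx (0 : 'I_1)) mulmxA -colE col0 mul0mx.
Qed.
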